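(* Let $p$ be an odd prime, $G = \mathrm{PGL}(2,p^2)$, and let $D$ be a subgroup of $G$ that is dihedral of order $2p$. Then the normalizer $N_G(D)$ is isomorphic to $C_p \rtimes C_{p-1}$.
   Context: $C_n$ denotes the cyclic group of order $n$. *)

From HB Require Import structures.
From mathcomp Require Import all_boot all_order all_algebra all_fingroup all_solvable all_field.
Set Implicit Arguments. Unset Strict Implicit. Unset Printing Implicit Defensive.

Definition GLscalars (F : finFieldType) : {set {'GL_2[F]}} :=
  [set g : {'GL_2[F]} | is_scalar_mx (GLval g)].

Definition PGL2 (F : finFieldType) : {set coset_of (GLscalars F)} :=
  ('GL_2[F] / GLscalars F)%g.

From HB Require Import structures.
From mathcomp Require Import all_boot all_order all_algebra all_fingroup all_solvable all_field.
From mathcomp Require Import ring.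

(* Only the characteristic p of F matters.  An element of order p of PGL(2,F)
   lifts to a matrix A with A^p scalar; since the Frobenius map of F is onto,
   A is a scalar times a unipotent matrix, so it is conjugate to the class u of
   [[1,1],[0,1]].  We may thus assume D = <u> <t> with u^t = u^-1, and then t
   lifts to a matrix [[a,b],[0,-a]].  Since p is odd, the normalizer N of D
   normalizes <u>; a matrix computation shows that <u> is its own centralizer
   in N, while upper triangular matrices with diagonal (1,k) realize in N every
   power map u |-> u^k, 0 < k < p.  Hence N/<u> is Aut(C_p), cyclic of order
   p - 1, and the Schur-Zassenhaus theorem splits N. *)

Set Implicit Arguments. Unset Strict Implicit. Unset Printing Implicit Defensive.
Import GRing.Theory.
Local Open Scope group_scope.

Section CpRtimesCpm1.
Variable gT : finGroupType.

Definition Cp_rtimes_Cpm1 (p : nat) (N : {set gT}) :=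
  exists K H : {group gT},
    [/\ K ><| H = N, cyclic K /\ #|K| = p, cyclic H /\ #|H| = p.-1 & 'C_H(K) = 1].

Lemma Cp_rtimes_Cpm1J p (N : {set gT}) z :
  Cp_rtimes_Cpm1 p (N :^ z) -> Cp_rtimes_Cpm1 p N.
Proof.
case=> K [H [defN [cycK oK] [cycH oH] cHK]].
exists (K :^ z^-1)%G, (H :^ z^-1)%G; split.
- by rewrite -sdprodJ defN conjsgK.
- by rewrite cyclicJ cardJg.
- by rewrite cyclicJ cardJg.
- by rewrite /= centJ -conjIg cHK conjs1g.
Qed.

End CpRtimesCpm1.

Section SelfCentralizingPrimeCycle.
Variables (gT : finGroupType) (N : {group gT}) (r : gT) (p : nat).
Hypotheses (p_pr : prime p) (ord_r : #[r] = p).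
Hypotheses (nrN : N \subset 'N(<[r]>)) (cent_r : 'C_N(<[r]>) = <[r]>).

Let A := conj_aut <[r]> @* N.

Lemma index_self_centralizing_cycle : #|N : <[r]>| = #|A|.
Proof.
by rewrite card_morphim (setIidPr nrN) ker_conj_aut -[RHS]indexgI cent_r.
Qed.

Lemma card_conj_aut_cycle_le : #|A| <= p.-1.
Proof.
rewrite -(totient_prime p_pr) -ord_r orderE -card_Aut_cyclic ?cycle_cyclic //.
exact/subset_leq_card/Aut_conj_aut.
Qed.

Hypothesis powers_r : forall k, 0 < k < p -> exists2 g, g \in N & r ^ g = r ^+ k.

Lemma card_conj_aut_cycle_ge : p.-1 <= #|A|.
Proof.
pose pw (k : 'I_p.-1) := r ^+ k.+1.
have lt_pw (k : 'I_p.-1) : k.+1 < p by rewrite -ltn_predRL ltn_ord.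
have inj_pw : injective pw.
  move=> j k /eqP; rewrite eq_expg_mod_order ord_r !modn_small //.
  by move/eqP=> [] /val_inj.
rewrite -[p.-1]card_ord -(card_imset _ inj_pw).
apply: leq_trans (leq_imset_card (fun a : {perm gT} => a r) A).
apply/subset_leq_card/subsetP => _ /imsetP[k _ ->].
have [g Ng rg] : exists2 g, g \in N & r ^ g = r ^+ k.+1 by apply: powers_r; rewrite lt_pw.
apply/imsetP; exists (conj_aut <[r]> g); first by rewrite mem_morphim ?(subsetP nrN).
by rewrite norm_conj_autE ?cycle_id ?(subsetP nrN) // rg.
Qed.

Lemma self_centralizing_cycle_sdprod : Cp_rtimes_Cpm1 p N.
Proof.
have oK : #|<[r]>| = p by rewrite -orderE.
have sKN : <[r]> \subset N by rewrite -cent_r subsetIl.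
have idxK : #|N : <[r]>| = p.-1.
  rewrite index_self_centralizing_cycle; apply/eqP.
  by rewrite eqn_leq card_conj_aut_cycle_le card_conj_aut_cycle_ge.
have hallK : Hall N <[r]>.
  by rewrite /Hall sKN idxK oK coprime_sym coprimePn ?prime_gt0.
have nsKN : <[r]> <| N by rewrite /normal sKN nrN.
have [H /complP[tiKH defN]] := splitsP (SchurZassenhaus_split hallK nsKN).
have sHN : H \subset N by rewrite -defN mulG_subr.
have nKH := subset_trans sHN nrN.
have cHK : 'C_H(<[r]>) = 1.
  apply/trivgP; rewrite -tiKH subsetI subsetIl andbT.
  by apply: subset_trans (setSI _ sHN) _; rewrite cent_r.
exists <[r]>%G, H; split=> //.
- by rewrite sdprodE.
- by rewrite cycle_cyclic oK.
split; last first.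
  apply/eqP; rewrite -(eqn_pmul2l (prime_gt0 p_pr)) -{1}oK -TI_cardMg // defN.
  by rewrite -(Lagrange sKN) oK idxK.
have inj_aut : 'injm (restrm nKH (conj_aut <[r]>)).
  by rewrite ker_restrm ker_conj_aut cHK.
rewrite -(injm_cyclic inj_aut (subxx H)) morphim_restrm setIid.
by apply: cyclicS (Aut_conj_aut _ _) _; apply: Aut_prime_cyclic; rewrite oK.
Qed.

End SelfCentralizingPrimeCycle.

Lemma dihedral_gens (gT : finGroupType) (G : {group gT}) q :
  1 < q -> G \isog 'D_(2 * q) ->
  exists r t, [/\ <[r]> * <[t]> = G, #[r] = q, #[t] = 2 & r ^ t = r^-1].
Proof.
move=> q_gt1; rewrite mul2n.
case/(isoGrpP _ (Grp_dihedral q_gt1)); rewrite card_dihedral // => oG.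
case/existsP=> -[r t] /= /eqP[defG rq t2 rt].
have{} defG : <[r]> * <[t]> = G.
  by rewrite -norm_joinEr // norms_cycle rt groupV cycle_id.
have ltrq : #[r] <= q by rewrite dvdn_leq ?(ltnW q_gt1) // order_dvdn rq.
have tNr : t \notin <[r]>.
  apply/negP => t_r; move: ltrq.
  rewrite [#[r]]orderE -(mulGSid (_ : <[t]> \subset <[r]>)) ?cycle_subG //.
  by rewrite defG oG -addnn -{3}[q]addn0 leq_add2l leqNgt (ltnW q_gt1).
have ord_t : #[t] = 2 by apply: nt_prime_order (group1_contra tNr).
have ord_r : #[r] = q.
  apply: double_inj; rewrite -muln2 -ord_t -oG -defG TI_cardMg //.
  by rewrite setIC prime_TIg ?cycle_subG // -orderE ord_t.
by exists r, t.
Qed.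

Section Dihedral.
Variables (gT : finGroupType) (D : {group gT}) (r t : gT) (p : nat).
Hypotheses (p_pr : prime p) (p_odd : odd p) (defD : <[r]> * <[t]> = D).
Hypotheses (ord_r : #[r] = p) (ord_t : #[t] = 2) (rt : r ^ t = r^-1).

Lemma mem_dihedral_rot : r \in D.
Proof. by rewrite -defD -{1}[r]mulg1 mem_mulg ?cycle_id ?group1. Qed.

Lemma dihedral_memP d : d \in D -> exists i, d = r ^+ i \/ d = r ^+ i * t.
Proof.
rewrite -defD => /mulsgP[u v /cycleP[i ->] tv ->]; exists i.
move: tv; rewrite cycle2g // !inE => /orP[/eqP-> | /eqP->]; last by right.
by left; rewrite mulg1.
Qed.

Lemma dihedral_reflection_sqr i : (r ^+ i * t) ^+ 2 = 1.
Proof.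
have tV : t^-1 = t.
  by apply/eqP; rewrite eq_invg_mul -{2}(expg1 t) -expgS -ord_t expg_order.
rewrite expgS expg1 -mulgA -{1}tV -[t^-1 * (_ * t)]/(r ^+ i ^ t).
by rewrite conjXg rt expgVn mulgV.
Qed.

Lemma dihedral_norm_cycle : 'N(D) \subset 'N(<[r]>).
Proof.
apply/subsetP => g Ng; rewrite inE -cycleJ cycle_subG.
have [i [->|rgE]] := dihedral_memP (etrans (memJ_norm r Ng) mem_dihedral_rot).
  exact: mem_cycle.
have : p %| 2 by rewrite -ord_r -(orderJ r g) rgE order_dvdn dihedral_reflection_sqr.
by rewrite dvdn_prime2 // => /eqP p2; move: p_odd; rewrite p2.
Qed.

Lemma dihedral_conj_reflection g : g \in 'N(D) -> exists i, t ^ g = r ^+ i * t.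
Proof.
move=> Ng; have Dt : t \in D by rewrite -defD -{1}[t]mul1g mem_mulg ?cycle_id ?group1.
have [i [tgE|]] := dihedral_memP (etrans (memJ_norm t Ng) Dt); last by exists i.
have := order_dvdG (mem_cycle r i).
by rewrite -tgE orderJ ord_t -orderE ord_r dvdn2 p_odd.
Qed.

End Dihedral.

Section TwoByTwoMatrices.
Variable R : comNzRingType.
Local Open Scope ring_scope.

Definition mx2 (a b c d : R) : 'M[R]_2 :=
  \matrix_(i, j) if i == 0 :> nat then (if j == 0 :> nat then a else b)
                 else (if j == 0 :> nat then c else d).

Lemma mx2E (M : 'M[R]_2) : M = mx2 (M 0 0) (M 0 1) (M 1 0) (M 1 1).
Proof.
apply/matrixP => i j; rewrite !mxE.
by case: i => [[|[|//]]] ?; case: j => [[|[|//]]] ? /=; congr (M _ _); apply: val_inj.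
Qed.

Lemma mx2_inj a b c d a' b' c' d' :
  mx2 a b c d = mx2 a' b' c' d' -> [/\ a = a', b = b', c = c' & d = d'].
Proof.
move=> /matrixP E.
by have := E 0 0; have := E 0 1; have := E 1 0; have := E 1 1; rewrite !mxE.
Qed.

Lemma mul_mx2 a b c d a' b' c' d' :
  mx2 a b c d * mx2 a' b' c' d' =
  mx2 (a * a' + b * c') (a * b' + b * d') (c * a' + d * c') (c * b' + d * d').
Proof.
apply/matrixP => i j; rewrite !mxE !big_ord_recl big_ord0 !mxE /=.
by case: i => [[|[|//]]] ?; case: j => [[|[|//]]] ? /=; rewrite addr0.
Qed.

Lemma add_mx2 a b c d a' b' c' d' :
  mx2 a b c d + mx2 a' b' c' d' = mx2 (a + a') (b + b') (c + c') (d + d').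
Proof.
apply/matrixP => i j; rewrite !mxE.
by case: i => [[|[|//]]] ?; case: j => [[|[|//]]] ? /=.
Qed.

Lemma scale_mx2 x a b c d : x *: mx2 a b c d = mx2 (x * a) (x * b) (x * c) (x * d).
Proof.
apply/matrixP => i j; rewrite !mxE.
by case: i => [[|[|//]]] ?; case: j => [[|[|//]]] ? /=.
Qed.

Lemma scalar_mx2 x : x%:M = mx2 x 0 0 x.
Proof.
apply/matrixP => i j; rewrite !mxE.
by case: i => [[|[|//]]] ?; case: j => [[|[|//]]] ? /=.
Qed.

Lemma mx2_1 : mx2 1 0 0 1 = 1.
Proof. by rewrite -scalar_mx2. Qed.

Lemma det_mx2 a b c d : \det (mx2 a b c d) = a * d - b * c.
Proof.
rewrite (expand_det_row _ 0) !big_ord_recl big_ord0 /cofactor.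
by rewrite !det_mx11 !mxE /= /bump /= expr0 expr1; ring.
Qed.

Lemma scalar_mul_mx2 x a b c d : x%:M * mx2 a b c d = mx2 (x * a) (x * b) (x * c) (x * d).
Proof. by rewrite scalar_mx2 mul_mx2; congr mx2; ring. Qed.

End TwoByTwoMatrices.

Section NilpotentTwoByTwo.
Variable F : fieldType.
Local Open Scope ring_scope.

Lemma mx2_nilpotent_sqr0 (B : 'M[F]_2) n : B ^+ n = 0 -> B * B = 0.
Proof.
case: n => [|n]; first by rewrite expr0 => /eqP; rewrite oner_eq0.
move=> Bn.
have : B ^+ n.+1 \isn't a GRing.unit by rewrite Bn unitr0.
rewrite unitrX_pos // unitmxE unitfE negbK; move: Bn; rewrite [B]mx2E.
set x := B 0 0; set y := B 0 1; set z := B 1 0; set w := B 1 1.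
rewrite det_mx2 => Bn /eqP detB.
have yz : y * z = x * w by apply/eqP; rewrite eq_sym -subr_eq0 detB.
have sqrB : mx2 x y z w * mx2 x y z w = (x + w) *: mx2 x y z w.
  by rewrite mul_mx2 scale_mx2; congr mx2; rewrite ?[z * y]mulrC ?yz; ring.
have powB k : mx2 x y z w ^+ k.+1 = (x + w) ^+ k *: mx2 x y z w.
  elim: k => [|k IHk]; first by rewrite expr1 expr0 scale1r.
  by rewrite exprSr IHk -scalerAl sqrB scalerA -exprSr.
rewrite sqrB; move: Bn; rewrite powB => /eqP; rewrite scaler_eq0 expf_eq0.
by case/orP=> [/andP[_ /eqP->] | /eqP->]; rewrite ?scale0r ?scaler0.
Qed.

Lemma mx2_sqr0_similar (B : 'M[F]_2) : B * B = 0 -> B != 0 ->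
  exists2 P : 'M[F]_2, \det P != 0 & B * P = P * mx2 0 1 0 0.
Proof.
rewrite [B]mx2E.
set x := B 0 0; set y := B 0 1; set z := B 1 0; set w := B 1 1.
rewrite mul_mx2 => sqr0 nzB.
have [e1 e2 e3 e4] := mx2_inj (etrans sqr0 (mx2E 0)); rewrite !mxE in e1 e2 e3 e4.
have [z0|nz_z] := eqVneq z 0.
  have x0 : x = 0 by apply/eqP; move/eqP: e1; rewrite z0 mulr0 addr0 mulf_eq0 orbb.
  have w0 : w = 0 by apply/eqP; move/eqP: e4; rewrite z0 mul0r add0r mulf_eq0 orbb.
  have nz_y : y != 0.
    by apply: contraNneq nzB => y0; rewrite x0 y0 z0 w0 -scalar_mx2 raddf0.
  exists (mx2 y 0 0 1); first by rewrite det_mx2 mulr1 mulr0 subr0.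
  by rewrite !mul_mx2 x0 z0 w0; congr mx2; ring.
exists (mx2 x 1 z 0); first by rewrite det_mx2 mulr0 mul1r sub0r oppr_eq0.
by rewrite !mul_mx2; congr mx2; rewrite ?e1 ?e3; ring.
Qed.

End NilpotentTwoByTwo.

Section ProjectiveLinearGroup.
Variable F : finFieldType.

Lemma GLscalars_group_set : group_set (GLscalars F).
Proof.
apply/group_setP; split; first by rewrite inE; apply/is_scalar_mxP; exists 1%R.
move=> g h; rewrite !inE GL_ME => /is_scalar_mxP[a ->] /is_scalar_mxP[b ->].
by apply/is_scalar_mxP; exists (a * b)%R; rewrite scalar_mxM.
Qed.
Canonical GLscalars_group := Group GLscalars_group_set.

Local Notation proj := (coset GLscalars_group).

Lemma norm_GLscalars (g : {'GL_2[F]}) : g \in 'N(GLscalars F).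
Proof.
rewrite inE; apply/subsetP => _ /imsetP[h + ->]; rewrite !inE conjgE !GL_ME GL_VE.
case/is_scalar_mxP=> c ->; apply/is_scalar_mxP; exists c.
have cg : (c%:M * GLval g = GLval g * c%:M)%R := esym (scalar_mxC _ _).
by rewrite cg mulKr ?GL_unit.
Qed.

Lemma coset_GLM (A B : {'GL_2[F]}) : proj (A * B) = proj A * proj B.
Proof. by rewrite morphM ?norm_GLscalars. Qed.

Lemma coset_GLV (A : {'GL_2[F]}) : proj A^-1 = (proj A)^-1.
Proof. by rewrite morphV ?norm_GLscalars. Qed.

Lemma coset_GLX (A : {'GL_2[F]}) n : proj (A ^+ n) = proj A ^+ n.
Proof. by rewrite morphX ?norm_GLscalars. Qed.

Lemma coset_GLJ (A B : {'GL_2[F]}) : proj (A ^ B) = proj A ^ proj B.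
Proof. by rewrite morphJ ?norm_GLscalars. Qed.

Lemma coset_GL_eqP (A B : {'GL_2[F]}) :
  proj A = proj B <-> exists c, GLval A = (c%:M * GLval B)%R.
Proof.
have cosetP := rcoset_kercosetP (norm_GLscalars A) (norm_GLscalars B).
split.
  case/cosetP/rcosetP=> h + ->; rewrite inE => /is_scalar_mxP[c ec].
  by exists c; rewrite GL_ME ec.
case=> c ec; apply/cosetP/rcosetP; exists (A * B^-1); last by rewrite mulgKV.
rewrite inE GL_ME GL_VE ec -mulrA mulrV ?GL_unit // mulr1.
exact: scalar_mx_is_scalar.
Qed.

Lemma coset_GL_eq1P (A : {'GL_2[F]}) : proj A = 1 <-> exists c, GLval A = (c%:M)%R.
Proof.
rewrite -(morph1 proj) coset_GL_eqP GL_1E.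
by split=> -[c ec]; exists c; rewrite ec mulr1.
Qed.

Lemma coset_GL_conjP (X Y G : {'GL_2[F]}) : proj (X ^ G) = proj Y <->
  exists c, (GLval X * GLval G = c%:M * (GLval G * GLval Y))%R.
Proof.
rewrite coset_GL_eqP conjgE !GL_ME GL_VE.
have cG c : (GLval G * c%:M = c%:M * GLval G)%R := scalar_mxC _ _.
split=> -[c E]; exists c.
  by rewrite -[LHS](mulVKr (GL_unit G)) E !mulrA cG.
by rewrite E (mulrA (c%:M)%R) -cG -mulrA mulKr ?GL_unit.
Qed.

Lemma GL_XE (g : {'GL_2[F]}) n : GLval (g ^+ n) = (GLval g ^+ n)%R.
Proof.
elim: n => [|n IHn]; first by rewrite expg0 expr0.
by rewrite expgS GL_ME IHn exprS.
Qed.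

Lemma PGL2_setT : PGL2 F = setT.
Proof. exact: quotientT. Qed.

Definition mkGL (A : 'M[F]_2) : {'GL_2[F]} := insubd (1 : {'GL_2[F]}) A.

Lemma mkGLE (A : 'M[F]_2) : (\det A != 0)%R -> GLval (mkGL A) = A.
Proof. by move=> detA; rewrite val_insubd unitmxE unitfE detA. Qed.

End ProjectiveLinearGroup.

Section Unipotent.
Variable F : finFieldType.
Local Notation proj := (coset (GLscalars_group F)).

Definition unip : {'GL_2[F]} := mkGL (mx2 1 1 0 1)%R.

Lemma unipE : GLval unip = (mx2 1 1 0 1)%R.
Proof. by apply: mkGLE; rewrite det_mx2 mulr1 mulr0 subr0 oner_neq0. Qed.

Lemma unipXE n : GLval (unip ^+ n) = (mx2 1 n%:R 0 1)%R.
Proof.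
elim: n => [|n IHn]; first by rewrite expg0 GL_1E mx2_1.
by rewrite expgSr GL_ME IHn unipE mul_mx2; congr mx2; rewrite ?mulrS; ring.
Qed.

Lemma unipVE : GLval unip^-1 = (mx2 1 (-1) 0 1)%R.
Proof.
have unit_unip := GL_unit unip; rewrite unipE in unit_unip.
rewrite GL_VE unipE; apply: (mulrI unit_unip).
by rewrite mulrV // mul_mx2 -mx2_1; congr mx2; ring.
Qed.

Lemma conj_unip_triangular (G S : {'GL_2[F]}) (s : F) :
  GLval S = (mx2 1 s 0 1)%R -> proj (unip ^ G) = proj S ->
  exists2 x, (x != 0)%R & exists y, GLval G = (mx2 x y 0 (s * x))%R.
Proof.
move=> defS /coset_GL_conjP[c]; move: (GL_det G).
rewrite unipE defS [GLval G]mx2E.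
set x := (GLval G 0 0)%R; set y := (GLval G 0 1)%R.
set z := (GLval G 1 0)%R; set w := (GLval G 1 1)%R.
rewrite det_mx2 !mul_mx2 scalar_mul_mx2 => detG /mx2_inj[e1 e2 e3 e4].
rewrite !(mul0r, mul1r, mulr0, mulr1, addr0, add0r) in e1 e2 e3 e4.
have z0 : z = 0%R.
  have zz : (z * z = 0)%R.
    transitivity ((c * x - x) * z)%R; first by rewrite -e1; ring.
    by rewrite mulrBl mulrAC -e3; ring.
  by apply/eqP; move/eqP: zz; rewrite mulf_eq0 orbb.
rewrite z0 mulr0 subr0 in detG.
have nz_x : x != 0%R by apply: contraNneq detG => ->; rewrite mul0r.
have c1 : c = 1%R by apply: (mulIf nz_x); rewrite mul1r -e1 z0 addr0.
exists x => //; exists y; rewrite z0; congr mx2.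
by apply: (addrI y); rewrite e2 c1 mul1r addrC mulrC.
Qed.

Lemma conj_unipX_fixing (T : {'GL_2[F]}) (a b : F) k :
  (a != 0)%R -> (2%:R != 0 :> F)%R -> (k%:R != 0 :> F)%R ->
  GLval T = (mx2 a b 0 (- a))%R ->
  exists G, proj (unip ^ G) = proj (unip ^+ k) /\ proj (T ^ G) = proj T.
Proof.
move=> nz_a nz_2 nz_k defT.
(* Upper triangular with diagonal (1, k), so it conjugates unip to unip ^+ k;
   its corner entry is the one that makes it commute with T. *)
pose G := mkGL (mx2 1 (b * (1 - k%:R) / (2%:R * a)) 0 k%:R)%R.
have defG : GLval G = (mx2 1 (b * (1 - k%:R) / (2%:R * a)) 0 k%:R)%R.
  by apply: mkGLE; rewrite det_mx2 mul1r mulr0 subr0.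
exists G; split; apply/coset_GL_conjP; exists 1%R;
  rewrite ?unipE ?unipXE defG ?defT !mul_mx2 scalar_mul_mx2; congr mx2; try ring.
by field; rewrite nz_a nz_2.
Qed.

Lemma centralizer_unip_reflection (G T : {'GL_2[F]}) (a b : F) i h :
  (a != 0)%R -> (h.*2%:R = -1 :> F)%R -> GLval T = (mx2 a b 0 (- a))%R ->
  proj (unip ^ G) = proj unip -> proj (T ^ G) = proj (unip ^+ i * T) ->
  proj G = proj (unip ^+ (i * h)).
Proof.
move=> nz_a h2 defT /(conj_unip_triangular unipE)[x nz_x [y defG]].
case/coset_GL_conjP=> c; rewrite GL_ME unipXE defT defG mul1r.
rewrite !mul_mx2 scalar_mul_mx2 => /mx2_inj[e1 e2 _ _].
rewrite !(mul0r, mul1r, mulr0, mulr1, addr0, add0r) in e1 e2.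
have c1 : c = 1%R.
  by apply: (mulIf (mulf_neq0 nz_x nz_a)); rewrite mul1r -e1 mulrC.
have y2 : (y * 2%:R = - (x * i%:R))%R.
  apply: (mulIf nz_a); apply/eqP; rewrite -subr_eq0; apply/eqP.
  transitivity (a * y + b * x - (x * (b + i%:R * - a) + y * - a))%R; first by ring.
  by rewrite e2 c1 mul1r subrr.
apply/coset_GL_eqP; exists x; rewrite defG unipXE scalar_mul_mx2.
rewrite !(mul1r, mulr1, mulr0); congr mx2.
have -> : y = (- (y * 2%:R) * h%:R)%R.
  by rewrite mulNr -mulrA -natrM mul2n h2 mulrN1 opprK.
by rewrite y2 opprK natrM mulrA.
Qed.

Lemma GL_conj_unip p (A : {'GL_2[F]}) (lam : F) :
  p \in [pchar F]%R -> GLval (A ^+ p) = (lam%:M)%R -> ~~ is_scalar_mx (GLval A) ->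
  exists P, proj (A ^ P) = proj unip.
Proof.
move=> charFp; rewrite GL_XE; set M := GLval A => Mp nscalM.
have [mu def_lam] : exists mu, lam = (mu ^+ p)%R.
  exact/codomP/(injF_onto (fmorph_inj (pFrobenius_aut charFp))).
have nz_mu : (mu != 0)%R.
  apply: contraTneq (unitrX p (GL_unit A)) => mu0; rewrite -/M Mp def_lam mu0.
  by rewrite expr0n (gtn_eqF (prime_gt0 (pcharf_prime charFp))) raddf0 unitr0.
pose B := (mu^-1 *: (M - mu%:M))%R.
have Bp : (B ^+ p = 0)%R.
  have charMp : p \in [pchar 'M[F]_2]%R by rewrite pchar_lalg.
  have := pFrobenius_autB_comm charMp (scalar_mxC mu M).
  by rewrite /B exprZn !pFrobenius_autE => ->; rewrite Mp -rmorphXn def_lam subrr scaler0.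
have nz_B : (B != 0)%R.
  apply: contra nscalM; rewrite scaler_eq0 invr_eq0 (negPf nz_mu) subr_eq0.
  by move=> /= /eqP ME; apply/is_scalar_mxP; exists mu.
have [P0 detP0 BP0] := mx2_sqr0_similar (mx2_nilpotent_sqr0 Bp) nz_B.
exists (mkGL P0); apply/coset_GL_conjP; exists mu; rewrite mkGLE // unipE -/M.
have -> : M = (mu%:M + mu *: B)%R by rewrite scalerA mulfV // scale1r addrC subrK.
have -> : (mx2 1 1 0 1 = 1 + mx2 0 1 0 0 :> 'M[F]_2)%R.
  by rewrite -mx2_1 add_mx2; congr mx2; ring.
rewrite mulrDl -scalerAl BP0 !mulrDr mulr1; congr (_ + _)%R.
exact: esym (mul_scalar_mx _ _).
Qed.

Lemma PGL2_conj_unip p (x : coset_of (GLscalars F)) :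
  p \in [pchar F]%R -> #[x] = p -> exists z, x ^ z = proj unip.
Proof.
move=> charFp ox; have xE : x = proj (repr x) by rewrite coset_reprK.
have [lam Xp] : exists lam, GLval (repr x ^+ p) = (lam%:M)%R.
  by apply/coset_GL_eq1P; rewrite coset_GLX -xE -ox expg_order.
have nscalX : ~~ is_scalar_mx (GLval (repr x)).
  apply/negP => /is_scalar_mxP[c Xc].
  have x1 : x = 1 by rewrite xE; apply/coset_GL_eq1P; exists c.
  by move: (pcharf_prime charFp); rewrite -ox x1 order1.
have [P XP] := GL_conj_unip charFp Xp nscalX.
by exists (proj P); rewrite {1}xE -coset_GLJ XP.
Qed.

End Unipotent.

Section OddCharacteristic.
Variables (R : nzRingType) (p : nat).
Hypotheses (charRp : p \in [pchar R]%R) (p_odd : odd p).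
Local Open Scope ring_scope.

Lemma pchar_odd_natr2_neq0 : 2%:R != 0 :> R.
Proof.
rewrite -(dvdn_pcharf charRp) dvdn_prime2 ?(pcharf_prime charRp) //.
by apply: contraTneq p_odd => ->.
Qed.

Lemma pchar_odd_half : (p./2).*2%:R = -1 :> R.
Proof.
apply/eqP; rewrite -addr_eq0 -(natrD _ _ 1) addn1.
have -> : (p./2).*2.+1 = p by rewrite -[in RHS](odd_double_half p) p_odd add1n.
by rewrite pcharf0.
Qed.

End OddCharacteristic.

Section DihedralUnipotent.
Variables (F : finFieldType) (p : nat) (D : {group coset_of (GLscalars F)}).
Variable t : coset_of (GLscalars F).
Local Notation proj := (coset (GLscalars_group F)).
Local Notation r := (proj (unip F)).
Hypotheses (p_pr : prime p) (p_odd : odd p) (charFp : p \in [pchar F]%R).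
Hypotheses (defD : <[r]> * <[t]> = D) (ord_r : #[r] = p) (ord_t : #[t] = 2).
Hypothesis rt : r ^ t = r^-1.

Lemma reflection_lift_triangular :
  exists2 a, (a != 0)%R & exists b, GLval (repr t) = (mx2 a b 0 (- a))%R.
Proof.
have : proj (unip F ^ repr t) = proj (unip F)^-1.
  by rewrite coset_GLJ coset_reprK rt coset_GLV.
case/(conj_unip_triangular (unipVE F))=> a nz_a [b].
by rewrite mulN1r; exists a => //; exists b.
Qed.

Lemma cent_normalizer_dihedral_unip : 'C_('N(D))(<[r]>) = <[r]>.
Proof.
have [a nz_a [b defT]] := reflection_lift_triangular.
have h2 := pchar_odd_half charFp p_odd.
apply/eqP; rewrite eqEsubset subsetI cycle_subG (subsetP (normG D));
  last exact: mem_dihedral_rot defD.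
rewrite (cycle_abelian r : <[r]> \subset 'C(<[r]>)) !andbT.
apply/subsetP => g /setIP[Ng]; rewrite cent_cycle => /cent1P cgr.
have [i tgE] := dihedral_conj_reflection p_odd defD ord_r ord_t Ng.
rewrite -(coset_reprK g).
rewrite (centralizer_unip_reflection (G := repr g) (i := i) nz_a h2 defT).
- by rewrite coset_GLX mem_cycle.
- by rewrite coset_GLJ coset_reprK /conjg -cgr mulKg.
by rewrite coset_GLJ (coset_reprK g) coset_GLM coset_GLX coset_reprK tgE.
Qed.

Lemma normalizer_dihedral_unip_powers k :
  0 < k < p -> exists2 g, g \in 'N(D) & r ^ g = r ^+ k.
Proof.
case/andP=> k_gt0 k_lt_p; have [a nz_a [b defT]] := reflection_lift_triangular.
have nz_k : (k%:R != 0 :> F)%R by rewrite -(dvdn_pcharf charFp) gtnNdvd.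
have nz_2 := pchar_odd_natr2_neq0 charFp p_odd.
have [G [rG tG]] := conj_unipX_fixing nz_a nz_2 nz_k defT.
rewrite !coset_GLJ coset_reprK coset_GLX in rG tG.
exists (proj G) => //; rewrite inE -defD conjsMg -!cycleJ rG tG.
by apply: mulSg; rewrite cycle_subG mem_cycle.
Qed.

Lemma normalizer_dihedral_unip : Cp_rtimes_Cpm1 p 'N(D).
Proof.
apply: self_centralizing_cycle_sdprod p_pr ord_r _ cent_normalizer_dihedral_unip _.
  exact: dihedral_norm_cycle p_pr p_odd defD ord_r ord_t rt.
exact: normalizer_dihedral_unip_powers.
Qed.

End DihedralUnipotent.

Unset Implicit Arguments.
Close Scope group_scope.

Theorem proposition3p4 (p : nat) (F : finFieldType)
    (D : {group coset_of (GLscalars F)}) :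
  prime p -> odd p -> #|F| = (p ^ 2)%N ->
  D \subset PGL2 F -> D \isog 'D_(2 * p) ->
  exists (K H : {group coset_of (GLscalars F)}),
    [/\ (K ><| H)%g = 'N_(PGL2 F)(D)%g,
        cyclic K /\ #|K| = p, cyclic H /\ #|H| = p.-1
      & 'C_H(K)%g = 1%g].
Proof.
move=> p_pr p_odd cardF _ isoD.
have charFp : (p \in [pchar F])%R := card_finPcharP cardF p_pr.
have [x [y [defD ord_x ord_y xy]]] := dihedral_gens (prime_gt1 p_pr) isoD.
have [z xz] := PGL2_conj_unip charFp ord_x.
change (Cp_rtimes_Cpm1 p 'N_(PGL2 F)(D)%g); rewrite PGL2_setT setTI.
apply: (Cp_rtimes_Cpm1J (z := z)); rewrite -normJ.
apply: (normalizer_dihedral_unip (D := (D :^ z)%G) (t := y ^ z)) => //.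
- by rewrite -xz !cycleJ -conjsMg defD.
- by rewrite -xz orderJ.
- by rewrite orderJ.
- by rewrite -xz -conjJg xy conjVg.
Qed.
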